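(* Let $L$ be a sublattice of $A_n$ of rank $n$. Then $$\Sigma^c(L)=\bigcup_{\nu\in\mathrm{Ext}^c(L)}\{x\in\mathbb R^{n+1}:x\ge\nu\}.$$
   Context: Let $n\ge 1$, $H_0=\{x\in\mathbb R^{n+1}:\sum_i x_i=0\}$ and $A_n=H_0\cap\mathbb Z^{n+1}$. For $x\in\mathbb R^{n+1}$, $\deg(x)=\sum_i x_i$. Write $x\le y$ iff $x_i\le y_i$ for all $i$. Let $\Sigma^{\mathbb R}(L)=\{x\in\mathbb R^{n+1}: x\not\le q\text{ for all }q\in L\}$ and let $\Sigma^c(L)$ be its topological closure in $\mathbb R^{n+1}$. $\mathrm{Ext}^c(L)$ is the set of points $x\in\Sigma^c(L)$ that are local minima of $\deg$ on $\Sigma^c(L)$, i.e. there is an open ball $B\ni x$ with $\deg(x)\le\deg(y)$ for all $y\in B\cap\Sigma^c(L)$. *)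

From Stdlib Require Import Reals Lra ZArith.
Open Scope R_scope.

(* Points of R^(n+1) are represented as functions nat -> R; only the
   coordinates 0..n are ever inspected by the predicates below. *)
Definition vec := nat -> R.
Definition zvec := nat -> Z.

Definition deg (n : nat) (x : vec) : R := sum_f_R0 x n.

Definition vle (n : nat) (x y : vec) : Prop := forall i, (i <= n)%nat -> x i <= y i.

Definition dist (n : nat) (x y : vec) : R :=
  sqrt (sum_f_R0 (fun i => (x i - y i) ^ 2) n).

Definition zR (q : zvec) : vec := fun i => IZR (q i).

(* A_n = H_0 ∩ Z^(n+1); integer vectors are canonically zero beyond index n *)
Definition in_An (n : nat) (q : zvec) : Prop :=
  (sum_f_R0 (fun i => IZR (q i)) n = 0) /\ (forall i, (n < i)%nat -> q i = 0%Z).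

Definition sublattice_An (n : nat) (L : zvec -> Prop) : Prop :=
  (forall q, L q -> in_An n q) /\
  L (fun _ => 0%Z) /\
  (forall p q, L p -> L q -> L (fun i => (p i - q i)%Z)).

(* L has rank n: it contains n vectors v_0..v_{n-1} linearly independent over R
   (rank <= n is automatic since L ⊆ A_n, which has rank n). *)
Definition has_rank (n : nat) (L : zvec -> Prop) : Prop :=
  exists v : nat -> zvec,
    (forall k, (k < n)%nat -> L (v k)) /\
    (forall c : nat -> R,
        (forall i, (i <= n)%nat ->
           sum_f_R0 (fun k => c k * IZR (v k i)) (Nat.pred n) = 0) ->
        forall k, (k < n)%nat -> c k = 0).

Definition SigmaR (n : nat) (L : zvec -> Prop) (x : vec) : Prop :=
  forall q, L q -> ~ vle n x (zR q).

Definition closure (n : nat) (S : vec -> Prop) (x : vec) : Prop :=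
  forall eps, 0 < eps -> exists y, S y /\ dist n x y < eps.

Definition Sigmac (n : nat) (L : zvec -> Prop) : vec -> Prop :=
  closure n (SigmaR n L).

Definition Extc (n : nat) (L : zvec -> Prop) (x : vec) : Prop :=
  Sigmac n L x /\
  exists r, 0 < r /\
    forall y, dist n x y < r -> Sigmac n L y -> deg n x <= deg n y.

From Pilot Require Import Defs.
From Stdlib Require Import Reals ZArith Lra Lia Classical FunctionalExtensionality.
Open Scope R_scope.

(* A point lies in Σ^c(L) iff it is not strictly below any q ∈ L in every
   coordinate; this set is upward closed, which gives one inclusion.  For the
   other, start from x ∈ Σ^c(L) and lower its coordinates one at a time as far
   as possible, reaching ν ≤ x in Σ^c(L).  Because L has full rank in A_n it
   contains points whose coordinates other than the i-th are arbitrarily large,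
   so each lowering stops at a finite value.  Minimality of ν in direction i
   and integrality of L give q ∈ L with q_i = ν_i and q_j > ν_j for j ≠ i.
   Every point y of Σ^c(L) close to ν is not strictly below q, hence y_i ≥ ν_i;
   so y ≥ ν near ν, and ν is a local minimum of deg. *)

Fixpoint rsum (m : nat) (f : nat -> R) : R :=
  match m with O => 0 | S p => rsum p f + f p end.

Lemma rsum_S m f : rsum (S m) f = rsum m f + f m.
Proof. reflexivity. Qed.

Lemma sum_f_R0_rsum f N : sum_f_R0 f N = rsum (S N) f.
Proof. induction N as [|N IH]; simpl; [ring|]. rewrite IH. reflexivity. Qed.

Lemma rsum_ext m f g : (forall k, (k < m)%nat -> f k = g k) -> rsum m f = rsum m g.
Proof.
  induction m as [|m IH]; intros H; simpl; [reflexivity|].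
  rewrite IH by (intros; apply H; lia). rewrite H by lia. reflexivity.
Qed.

Lemma rsum_plus m f g : rsum m (fun k => f k + g k) = rsum m f + rsum m g.
Proof. induction m as [|m IH]; simpl; [ring|]. rewrite IH; ring. Qed.

Lemma rsum_scal m c f : rsum m (fun k => c * f k) = c * rsum m f.
Proof. induction m as [|m IH]; simpl; [ring|]. rewrite IH; ring. Qed.

Lemma rsum_opp m f : rsum m (fun k => - f k) = - rsum m f.
Proof. induction m as [|m IH]; simpl; [ring|]. rewrite IH; ring. Qed.

Lemma rsum_const m c : rsum m (fun _ => c) = INR m * c.
Proof. induction m as [|m IH]; [simpl; ring|]. rewrite rsum_S, IH, S_INR. ring. Qed.

Lemma rsum_0 m : rsum m (fun _ => 0) = 0.
Proof. rewrite rsum_const. ring. Qed.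

Lemma rsum_le m f g : (forall k, (k < m)%nat -> f k <= g k) -> rsum m f <= rsum m g.
Proof.
  induction m as [|m IH]; intros H; simpl; [lra|].
  assert (f m <= g m) by (apply H; lia).
  assert (rsum m f <= rsum m g) by (apply IH; intros; apply H; lia). lra.
Qed.

Lemma rsum_nonneg m f : (forall k, 0 <= f k) -> 0 <= rsum m f.
Proof. intros Hf. induction m as [|m IH]; simpl; [lra|]. specialize (Hf m). lra. Qed.

Lemma rsum_term_le m f j : (forall k, 0 <= f k) -> (j < m)%nat -> f j <= rsum m f.
Proof.
  intros Hf. induction m as [|m IH]; intros Hj; [lia|]. rewrite rsum_S.
  destruct (Nat.eq_dec j m) as [->|Hjm].
  - pose proof (rsum_nonneg m f Hf). lra.
  - pose proof (IH ltac:(lia)). specialize (Hf m). lra.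
Qed.

Lemma rsum_swap p q (f : nat -> nat -> R) :
  rsum p (fun k => rsum q (fun j => f k j)) = rsum q (fun j => rsum p (fun k => f k j)).
Proof.
  induction p as [|p IH]; simpl.
  - symmetry; apply rsum_0.
  - rewrite IH, <- rsum_plus. reflexivity.
Qed.

Definition skip (r k : nat) : nat := if Nat.ltb k r then k else S k.

Definition unskip (r l : nat) : nat := if Nat.ltb l r then l else pred l.

Lemma skip_unskip r l : l <> r -> skip r (unskip r l) = l.
Proof.
  intros H. unfold skip, unskip. destruct (Nat.ltb_spec l r);
    [destruct (Nat.ltb_spec l r) | destruct (Nat.ltb_spec (pred l) r)]; lia.
Qed.

Lemma unskip_lt r l n : (r <= n)%nat -> (l <= n)%nat -> l <> r -> (unskip r l < n)%nat.
Proof. intros. unfold unskip. destruct (Nat.ltb_spec l r); lia. Qed.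

Lemma rsum_skip p r g :
  (r <= p)%nat -> rsum (S p) g = rsum p (fun k => g (skip r k)) + g r.
Proof.
  induction p as [|p IH]; intros Hr.
  - assert (r = 0%nat) by lia; subst. simpl. ring.
  - rewrite (rsum_S (S p)). destruct (Nat.eq_dec r (S p)) as [->|Hrp].
    + f_equal. apply rsum_ext. intros k Hk.
      unfold skip. destruct (Nat.ltb_spec k (S p)); [reflexivity|lia].
    + rewrite IH by lia. rewrite rsum_S.
      replace (skip r p) with (S p) by (unfold skip; destruct (Nat.ltb_spec p r); lia).
      ring.
Qed.

Lemma fin_bound (f : nat -> R) n : exists B, forall i, (i <= n)%nat -> f i <= B.
Proof.
  induction n as [|n [B HB]].
  - exists (f 0%nat). intros i Hi. replace i with 0%nat by lia. lra.
  - exists (Rmax B (f (S n))). intros i Hi. destruct (Nat.eq_dec i (S n)) as [->|Hin].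
    + apply Rmax_r.
    + eapply Rle_trans; [apply HB; lia | apply Rmax_l].
Qed.

Lemma finite_min_radius (n : nat) (P : nat -> R -> Prop) :
  (forall i d d', 0 < d' <= d -> P i d -> P i d') ->
  (forall i, (i <= n)%nat -> exists d, 0 < d /\ P i d) ->
  exists d, 0 < d /\ forall i, (i <= n)%nat -> P i d.
Proof.
  intros Hmono. induction n as [|n IH]; intros H.
  - destruct (H 0%nat (le_n 0)) as [d [Hd HP]]. exists d. split; [exact Hd|].
    intros i Hi. replace i with 0%nat by lia. exact HP.
  - destruct IH as [d1 [Hd1 HP1]]; [intros; apply H; lia|].
    destruct (H (S n) (le_n _)) as [d2 [Hd2 HP2]].
    assert (Hmin : 0 < Rmin d1 d2) by (apply Rmin_pos; assumption).
    exists (Rmin d1 d2). split; [exact Hmin|]. intros i Hi.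
    destruct (Nat.eq_dec i (S n)) as [->|Hin].
    + apply (Hmono _ d2); [split; [exact Hmin | apply Rmin_r] | exact HP2].
    + apply (Hmono _ d1); [split; [exact Hmin | apply Rmin_l] | apply HP1; lia].
Qed.

(** * Linear algebra: n independent vectors span R^n *)

Definition nontrivial_relation (m : nat) (w : nat -> nat -> R) : Prop :=
  exists a, (exists k, (k <= m)%nat /\ a k <> 0) /\
    forall j, (j < m)%nat -> rsum (S m) (fun k => a k * w k j) = 0.

Definition insert_at (r : nat) (x : R) (b : nat -> R) (k : nat) : R :=
  if Nat.eqb k r then x else if Nat.ltb k r then b k else b (pred k).

Lemma insert_at_skip r x b k : insert_at r x b (skip r k) = b k.
Proof.
  unfold insert_at, skip. destruct (Nat.ltb_spec k r).
  - destruct (Nat.eqb_spec k r); [lia|]. destruct (Nat.ltb_spec k r); [reflexivity|lia].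
  - destruct (Nat.eqb_spec (S k) r); [lia|]. destruct (Nat.ltb_spec (S k) r); [lia|reflexivity].
Qed.

Lemma rsum_insert_at m r x b g : (r <= m)%nat ->
  rsum (S m) (fun k => insert_at r x b k * g k) = rsum m (fun k => b k * g (skip r k)) + x * g r.
Proof.
  intros Hr. rewrite (rsum_skip m r) by exact Hr. f_equal.
  - apply rsum_ext. intros k _. rewrite insert_at_skip. reflexivity.
  - unfold insert_at. rewrite Nat.eqb_refl. reflexivity.
Qed.

Lemma nontrivial_relation_last_zero m w :
  nontrivial_relation m w -> (forall k, (k <= S m)%nat -> w k m = 0) ->
  nontrivial_relation (S m) w.
Proof.
  intros [a [[k0 [Hk0 Ha]] Hrel]] Hzero.
  exists (fun k => if Nat.leb k m then a k else 0). split.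
  - exists k0. split; [lia|]. destruct (Nat.leb_spec k0 m); [exact Ha|lia].
  - intros j Hj. rewrite rsum_S. destruct (Nat.leb_spec (S m) m); [lia|].
    rewrite (rsum_ext _ _ (fun k => a k * w k j))
      by (intros k Hk; destruct (Nat.leb_spec k m); [reflexivity|lia]).
    destruct (Nat.eq_dec j m) as [->|Hjm].
    + rewrite (rsum_ext _ _ (fun _ => 0)) by (intros k Hk; rewrite Hzero by lia; ring).
      rewrite rsum_0. ring.
    + rewrite Hrel by lia. ring.
Qed.

(* Gaussian elimination step on the last coordinate, with pivot [w r]. *)
Lemma nontrivial_relation_pivot m w r :
  (forall w', nontrivial_relation m w') -> (r <= S m)%nat -> w r m <> 0 ->
  nontrivial_relation (S m) w.
Proof.
  intros IH Hr Hw.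
  set (t := fun k => w (skip r k) m / w r m).
  destruct (IH (fun k j => w (skip r k) j - t k * w r j)) as [b [[k0 [Hk0 Hb]] Hrel]].
  set (s := rsum (S m) (fun k => b k * t k)).
  exists (insert_at r (- s) b). split.
  - exists (skip r k0). rewrite insert_at_skip.
    split; [unfold skip; destruct (Nat.ltb_spec k0 r); lia | exact Hb].
  - intros j Hj. rewrite rsum_insert_at by exact Hr.
    assert (E : rsum (S m) (fun k => b k * w (skip r k) j)
              = rsum (S m) (fun k => b k * (w (skip r k) j - t k * w r j)) + s * w r j).
    { unfold s. rewrite (Rmult_comm _ (w r j)), <- rsum_scal, <- rsum_plus.
      apply rsum_ext. intros; ring. }
    rewrite E. destruct (Nat.eq_dec j m) as [->|Hjm].
    + rewrite (rsum_ext _ _ (fun _ => 0)) by (intros k _; unfold t; field; exact Hw).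
      rewrite rsum_0. ring.
    + rewrite Hrel by lia. ring.
Qed.

Lemma nontrivial_relation_exists m w : nontrivial_relation m w.
Proof.
  revert w; induction m as [|m IH]; intros w.
  - exists (fun _ => 1). split; [exists 0%nat; split; [lia|lra] | intros j Hj; lia].
  - destruct (classic (exists r, (r <= S m)%nat /\ w r m <> 0)) as [[r [Hr Hw]]|Hnone].
    + exact (nontrivial_relation_pivot m w r IH Hr Hw).
    + apply nontrivial_relation_last_zero; [apply IH|].
      intros k Hk. apply NNPP. intro Hne. apply Hnone. exists k. split; assumption.
Qed.

Lemma independent_family_spans m (v : nat -> nat -> R) :
  (forall c, (forall j, (j < m)%nat -> rsum m (fun k => c k * v k j) = 0) ->
     forall k, (k < m)%nat -> c k = 0) ->
  forall u : nat -> R, exists c, forall j, (j < m)%nat -> rsum m (fun k => c k * v k j) = u j.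
Proof.
  intros Hind u.
  destruct (nontrivial_relation_exists m (fun k j => if Nat.ltb k m then v k j else u j))
    as [a [[k0 [Hk0 Ha]] Hrel]].
  assert (Hrel' : forall j, (j < m)%nat -> rsum m (fun k => a k * v k j) + a m * u j = 0).
  { intros j Hj. specialize (Hrel j Hj). rewrite rsum_S, Nat.ltb_irrefl in Hrel.
    rewrite (rsum_ext m _ (fun k => a k * v k j)) in Hrel; [exact Hrel|].
    intros k Hk. destruct (Nat.ltb_spec k m); [reflexivity|lia]. }
  assert (Ham : a m <> 0).
  { intro H0. assert (Hzero : forall k, (k < m)%nat -> a k = 0).
    { apply Hind. intros j Hj. specialize (Hrel' j Hj). rewrite H0 in Hrel'. lra. }
    destruct (Nat.eq_dec k0 m) as [->|Hk]; [contradiction|]. apply Ha, Hzero. lia. }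
  exists (fun k => - a k / a m). intros j Hj.
  rewrite (rsum_ext _ _ (fun k => (- / a m) * (a k * v k j))) by (intros; field; exact Ham).
  rewrite rsum_scal. specialize (Hrel' j Hj).
  replace (rsum m (fun k => a k * v k j)) with (- (a m * u j)) by lra.
  field. exact Ham.
Qed.

(* In H_0 the coordinate [i] is determined by the others, so dropping it keeps
   a family independent. *)
Lemma H0_drop_coord_independent n m (v : nat -> vec) i :
  (i <= n)%nat ->
  (forall k, (k < m)%nat -> rsum (S n) (v k) = 0) ->
  (forall c, (forall l, (l <= n)%nat -> rsum m (fun k => c k * v k l) = 0) ->
     forall k, (k < m)%nat -> c k = 0) ->
  forall c, (forall j, (j < n)%nat -> rsum m (fun k => c k * v k (skip i j)) = 0) ->
  forall k, (k < m)%nat -> c k = 0.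
Proof.
  intros Hi Hsum Hind c Hc. apply Hind. intros l Hl.
  destruct (Nat.eq_dec l i) as [->|Hli].
  - assert (Hvi : forall k, (k < m)%nat -> v k i = - rsum n (fun j => v k (skip i j))).
    { intros k Hk. specialize (Hsum k Hk). rewrite (rsum_skip n i) in Hsum by exact Hi. lra. }
    rewrite (rsum_ext _ _ (fun k => - rsum n (fun j => c k * v k (skip i j)))).
    + rewrite rsum_opp, rsum_swap, (rsum_ext _ _ (fun _ => 0)) by (intros j Hj; apply Hc, Hj).
      rewrite rsum_0. ring.
    + intros k Hk. rewrite Hvi, (rsum_scal n (c k) (fun j => v k (skip i j))) by exact Hk. ring.
  - rewrite <- (skip_unskip i l) by exact Hli. apply Hc. apply unskip_lt; assumption.
Qed.

Lemma H0_combination_off_coord n (v : nat -> vec) i (u : vec) :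
  (i <= n)%nat ->
  (forall k, (k < n)%nat -> rsum (S n) (v k) = 0) ->
  (forall c, (forall l, (l <= n)%nat -> rsum n (fun k => c k * v k l) = 0) ->
     forall k, (k < n)%nat -> c k = 0) ->
  exists c, forall l, (l <= n)%nat -> l <> i -> rsum n (fun k => c k * v k l) = u l.
Proof.
  intros Hi Hsum Hind.
  destruct (independent_family_spans n (fun k j => v k (skip i j))
              (H0_drop_coord_independent n n v i Hi Hsum Hind) (fun j => u (skip i j)))
    as [c Hc].
  exists c. intros l Hl Hli. rewrite <- (skip_unskip i l) by exact Hli.
  apply Hc. apply unskip_lt; assumption.
Qed.

Fixpoint zsum (m : nat) (f : nat -> Z) : Z :=
  match m with O => 0%Z | S p => (zsum p f + f p)%Z end.

Lemma IZR_zsum m f : IZR (zsum m f) = rsum m (fun k => IZR (f k)).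
Proof. induction m as [|m IH]; simpl; [reflexivity|]. rewrite plus_IZR, IH. reflexivity. Qed.

Lemma up_error_bound x y : - Rabs y <= (IZR (up x) - x) * y.
Proof.
  destruct (archimed x) as [H1 H2]. destruct (Rcase_abs y) as [Hy|Hy];
    [rewrite Rabs_left by exact Hy | rewrite Rabs_right by exact Hy]; nra.
Qed.

Section SublatticeClosure.
Variables (n : nat) (L : zvec -> Prop).
Hypothesis HL : sublattice_An n L.

Lemma sublattice_ext p q : L p -> (forall l, p l = q l) -> L q.
Proof. intros Hp H. replace q with p; [exact Hp|]. extensionality l. apply H. Qed.

Lemma sublattice_opp p : L p -> L (fun l => (- p l)%Z).
Proof.
  destruct HL as [_ [H0 Hsub]]. intros Hp.
  apply (sublattice_ext _ _ (Hsub _ _ H0 Hp)). intros; lia.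
Qed.

Lemma sublattice_add p q : L p -> L q -> L (fun l => (p l + q l)%Z).
Proof.
  destruct HL as [_ [_ Hsub]]. intros Hp Hq.
  apply (sublattice_ext _ _ (Hsub _ _ Hp (sublattice_opp _ Hq))). intros; lia.
Qed.

Lemma sublattice_nat_mul p m : L p -> L (fun l => (Z.of_nat m * p l)%Z).
Proof.
  destruct HL as [_ [H0 _]]. intros Hp. induction m as [|m IH].
  - apply (sublattice_ext _ _ H0). intros; simpl; lia.
  - apply (sublattice_ext _ _ (sublattice_add _ _ IH Hp)). intros; lia.
Qed.

Lemma sublattice_zmul p z : L p -> L (fun l => (z * p l)%Z).
Proof.
  intros Hp. destruct (Z_le_gt_dec 0 z).
  - apply (sublattice_ext _ _ (sublattice_nat_mul p (Z.to_nat z) Hp)).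
    intros; rewrite Z2Nat.id; lia.
  - apply (sublattice_ext _ _ (sublattice_opp _ (sublattice_nat_mul p (Z.to_nat (- z)) Hp))).
    intros; rewrite Z2Nat.id; lia.
Qed.

Lemma sublattice_lincomb (v : nat -> zvec) (a : nat -> Z) m :
  (forall k, (k < m)%nat -> L (v k)) -> L (fun l => zsum m (fun k => (a k * v k l)%Z)).
Proof.
  destruct HL as [_ [H0 _]]. induction m as [|m IH]; intros Hv; [exact H0|].
  exact (sublattice_add _ _ (IH (fun k Hk => Hv k ltac:(lia)))
           (sublattice_zmul _ (a m) (Hv m ltac:(lia)))).
Qed.

End SublatticeClosure.

Definition large_off_coord (n : nat) (L : zvec -> Prop) : Prop :=
  forall i, (i <= n)%nat -> forall M,
    exists q, L q /\ forall j, (j <= n)%nat -> j <> i -> M < IZR (q j).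

(* Write (1,..,1) off coordinate i as a real combination of a basis of L and
   round the coefficients of a large multiple up to integers. *)
Lemma full_rank_large_off_coord n L :
  (1 <= n)%nat -> sublattice_An n L -> has_rank n L -> large_off_coord n L.
Proof.
  intros Hn HL [v [Hv Hind]] i Hi M.
  set (w := fun k => zR (v k)).
  assert (Hsum : forall k, (k < n)%nat -> rsum (S n) (w k) = 0).
  { intros k Hk. destruct HL as [HA _]. destruct (HA _ (Hv k Hk)) as [Hs _].
    rewrite sum_f_R0_rsum in Hs. exact Hs. }
  assert (Hindw : forall c, (forall l, (l <= n)%nat -> rsum n (fun k => c k * w k l) = 0) ->
                   forall k, (k < n)%nat -> c k = 0).
  { intros c Hc. apply Hind. intros l Hl.
    rewrite sum_f_R0_rsum, Nat.succ_pred_pos by lia. exact (Hc l Hl). }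
  destruct (H0_combination_off_coord n w i (fun _ => 1) Hi Hsum Hindw) as [c Hc].
  destruct (fin_bound (fun l => rsum n (fun k => Rabs (w k l))) n) as [B HB].
  set (N := M + B + 1).
  exists (fun l => zsum n (fun k => (up (N * c k) * v k l)%Z)). split.
  - apply (sublattice_lincomb n L HL). exact Hv.
  - intros j Hj Hji. rewrite IZR_zsum.
    rewrite (rsum_ext _ _ (fun k => N * (c k * w k j) + (IZR (up (N * c k)) - N * c k) * w k j))
      by (intros k _; unfold w, zR; rewrite mult_IZR; ring).
    rewrite rsum_plus, rsum_scal, Hc by assumption.
    assert (Herr : - rsum n (fun k => Rabs (w k j))
                   <= rsum n (fun k => (IZR (up (N * c k)) - N * c k) * w k j)).
    { rewrite <- rsum_opp. apply rsum_le. intros k _. apply up_error_bound. }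
    specialize (HB j Hj). cbv beta in HB |- *. unfold N in *. lra.
Qed.

Definition dominated (n : nat) (L : zvec -> Prop) (z : vec) : Prop :=
  exists q, L q /\ forall j, (j <= n)%nat -> z j < IZR (q j).

Lemma dominated_antitone n L w w' : vle n w w' -> dominated n L w' -> dominated n L w.
Proof.
  intros Hle [q [Lq Hq]]. exists q. split; [exact Lq|].
  intros j Hj. specialize (Hle j Hj). specialize (Hq j Hj). lra.
Qed.

Lemma not_dominated_witness n L y q :
  ~ dominated n L y -> L q -> exists j, (j <= n)%nat /\ IZR (q j) <= y j.
Proof.
  intros Hy Lq. apply NNPP. intro Hno. apply Hy. exists q. split; [exact Lq|].
  intros j Hj. apply Rnot_le_lt. intro Hle. apply Hno. exists j. split; assumption.
Qed.

Lemma coord_dist_le n x y j : (j <= n)%nat -> Rabs (x j - y j) <= Defs.dist n x y.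
Proof.
  intros Hj. unfold Defs.dist. rewrite <- sqrt_Rsqr_abs. apply sqrt_le_1_alt.
  rewrite sum_f_R0_rsum. unfold Rsqr.
  replace ((x j - y j) * (x j - y j)) with ((fun i => (x i - y i) ^ 2) j) by (simpl; ring).
  apply (rsum_term_le _ (fun i => (x i - y i) ^ 2)); [intros k; apply pow2_ge_0 | lia].
Qed.

Lemma dist_shift n z c : Defs.dist n z (fun j => z j + c) = sqrt (INR (S n) * c ^ 2).
Proof.
  unfold Defs.dist. f_equal. rewrite sum_f_R0_rsum, <- rsum_const.
  apply rsum_ext. intros; ring.
Qed.

Lemma Sigmac_iff_not_dominated n L z : Sigmac n L z <-> ~ dominated n L z.
Proof.
  split.
  - intros Hz [q [Lq Hq]].
    destruct (finite_min_radius n (fun j d => z j + d <= IZR (q j))) as [d [Hd Hzd]].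
    { intros; lra. }
    { intros j Hj. exists (IZR (q j) - z j). specialize (Hq j Hj). split; lra. }
    destruct (Hz d Hd) as [y [Hy Hdist]]. apply (Hy q Lq). intros j Hj. unfold zR.
    pose proof (coord_dist_le n z y j Hj). specialize (Hzd j Hj).
    assert (Habs : Rabs (z j - y j) < d) by lra. apply Rabs_def2 in Habs. lra.
  - intros Hz eps Heps.
    set (s := INR (S n)).
    assert (Hs : 1 <= s) by (unfold s; rewrite S_INR; pose proof (pos_INR n); lra).
    set (c := eps / (2 * s)).
    assert (Hc : 0 < c) by (unfold c; apply Rdiv_lt_0_compat; lra).
    assert (Hsc : s * c = eps / 2) by (unfold c; field; lra).
    exists (fun j => z j + c). split.
    + intros q Lq Hle. apply Hz. exists q. split; [exact Lq|].
      intros j Hj. specialize (Hle j Hj). unfold zR in Hle. lra.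
    + rewrite dist_shift. fold s. rewrite <- (sqrt_pow2 eps) by lra.
      apply sqrt_lt_1_alt. assert (c <= eps / 2) by nra. split; nra.
Qed.

(** * Lowering coordinates *)

Definition upd (z : vec) (i : nat) (t : R) : vec := fun j => if Nat.eqb j i then t else z j.

Lemma upd_same z i t : upd z i t i = t.
Proof. unfold upd. rewrite Nat.eqb_refl. reflexivity. Qed.

Lemma upd_other z i t j : j <> i -> upd z i t j = z j.
Proof. intros H. unfold upd. destruct (Nat.eqb_spec j i); [contradiction|reflexivity]. Qed.

Lemma upd_upd z i s t : upd (upd z i s) i t = upd z i t.
Proof. extensionality j. unfold upd. destruct (Nat.eqb j i); reflexivity. Qed.

Lemma upd_id z i : upd z i (z i) = z.
Proof. extensionality j. unfold upd. destruct (Nat.eqb_spec j i); [subst|]; reflexivity. Qed.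

Definition coord_minimal (n : nat) (L : zvec -> Prop) (nu : vec) (i : nat) : Prop :=
  forall e, 0 < e -> dominated n L (upd nu i (nu i - e)).

Lemma coord_minimal_lower n L nu nu' i :
  vle n nu' nu -> nu' i = nu i -> coord_minimal n L nu i -> coord_minimal n L nu' i.
Proof.
  intros Hle Heq Hmin e He. apply (dominated_antitone _ _ _ (upd nu i (nu i - e))); [|exact (Hmin e He)].
  intros j Hj. unfold upd. destruct (Nat.eqb_spec j i); [rewrite Heq; lra | apply Hle, Hj].
Qed.

Section Lowering.
Variables (n : nat) (L : zvec -> Prop).
Hypothesis Hlarge : large_off_coord n L.

Lemma lower_coord z i : (i <= n)%nat -> ~ dominated n L z ->
  exists t, t <= z i /\ ~ dominated n L (upd z i t) /\ coord_minimal n L (upd z i t) i.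
Proof.
  intros Hi Hz.
  set (E := fun s => ~ dominated n L (upd z i (- s))).
  assert (HE : E (- z i)) by (unfold E; rewrite Ropp_involutive, upd_id; exact Hz).
  destruct (fin_bound z n) as [B HB].
  destruct (Hlarge i Hi B) as [q [Lq Hq]].
  assert (Hbound : bound E).
  { exists (- IZR (q i)). intros s Hs. apply Rnot_lt_le. intro Hlt. apply Hs.
    exists q. split; [exact Lq|]. intros j Hj.
    destruct (Nat.eq_dec j i) as [->|Hji]; [rewrite upd_same; lra|].
    rewrite upd_other by exact Hji. specialize (HB j Hj). specialize (Hq j Hj Hji). lra. }
  destruct (completeness E Hbound (ex_intro _ _ HE)) as [m [Hub Hlub]].
  exists (- m). split; [|split].
  - specialize (Hub _ HE). lra.
  - intros [q' [Lq' Hq']].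
    assert (Hqi : - m < IZR (q' i)) by (specialize (Hq' i Hi); rewrite upd_same in Hq'; exact Hq').
    assert (Hm : m <= - IZR (q' i)).
    { apply Hlub. intros s Hs. apply Rnot_lt_le. intro Hlt. apply Hs.
      exists q'. split; [exact Lq'|]. intros j Hj.
      destruct (Nat.eq_dec j i) as [->|Hji]; [rewrite upd_same; lra|].
      specialize (Hq' j Hj). rewrite upd_other in Hq' |- * by exact Hji. exact Hq'. }
    lra.
  - intros e He. rewrite upd_same, upd_upd. apply NNPP. intro Hnd.
    assert (Hme : E (m + e)) by (unfold E; replace (- (m + e)) with (- m - e) by ring; exact Hnd).
    specialize (Hub _ Hme). lra.
Qed.

Lemma lower_coords k : (k <= S n)%nat -> forall z, ~ dominated n L z ->
  exists nu, vle n nu z /\ ~ dominated n L nu /\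
    forall i, (i < k)%nat -> coord_minimal n L nu i.
Proof.
  induction k as [|k IH]; intros Hk z Hz.
  - exists z. split; [intros j _; lra|]. split; [exact Hz | intros; lia].
  - destruct (IH ltac:(lia) z Hz) as [nu [Hle [Hnu Hmin]]].
    destruct (lower_coord nu k ltac:(lia) Hnu) as [t [Ht [Hnu' Hmin']]].
    assert (Hlow : vle n (upd nu k t) nu).
    { intros j _. unfold upd. destruct (Nat.eqb_spec j k); [subst; lra | lra]. }
    exists (upd nu k t). split; [|split; [exact Hnu'|]].
    + intros j Hj. specialize (Hlow j Hj). specialize (Hle j Hj). lra.
    + intros i Hi. destruct (Nat.eq_dec i k) as [->|Hik]; [exact Hmin'|].
      apply (coord_minimal_lower n L nu); [exact Hlow | apply upd_other, Hik | apply Hmin; lia].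
Qed.

End Lowering.

(** * Coordinatewise minimal points are local minima of deg *)

Lemma coord_minimal_corner_approx n L nu i e :
  (i <= n)%nat -> ~ dominated n L nu -> 0 < e -> coord_minimal n L nu i ->
  exists q, L q /\ nu i - e < IZR (q i) <= nu i /\
    forall j, (j <= n)%nat -> j <> i -> nu j < IZR (q j).
Proof.
  intros Hi Hnu He Hmin. destruct (Hmin e He) as [q [Lq Hq]].
  assert (Hoff : forall j, (j <= n)%nat -> j <> i -> nu j < IZR (q j)).
  { intros j Hj Hji. specialize (Hq j Hj). rewrite upd_other in Hq by exact Hji. exact Hq. }
  exists q. split; [exact Lq|]. split; [split|exact Hoff].
  - specialize (Hq i Hi). rewrite upd_same in Hq. exact Hq.
  - destruct (not_dominated_witness n L nu q Hnu Lq) as [j [Hj Hqj]].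
    destruct (Nat.eq_dec j i) as [->|Hji]; [exact Hqj|]. specialize (Hoff j Hj Hji). lra.
Qed.

Lemma coord_minimal_corner n L nu i :
  (i <= n)%nat -> ~ dominated n L nu -> coord_minimal n L nu i ->
  exists q, L q /\ IZR (q i) = nu i /\ forall j, (j <= n)%nat -> j <> i -> nu j < IZR (q j).
Proof.
  intros Hi Hnu Hmin.
  destruct (coord_minimal_corner_approx n L nu i (1/2) Hi Hnu ltac:(lra) Hmin)
    as [q [Lq [[Hq1 Hq2] Hoff]]].
  exists q. split; [exact Lq|]. split; [|exact Hoff].
  destruct (Req_dec (IZR (q i)) (nu i)) as [Heq|Hne]; [exact Heq|exfalso].
  (* otherwise q_i < q2_i would be two integers in (nu_i - 1/2, nu_i] *)
  destruct (coord_minimal_corner_approx n L nu i (nu i - IZR (q i)) Hi Hnu ltac:(lra) Hmin)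
    as [q2 [_ [[H1 H2] _]]].
  assert (Hlt : (q i < q2 i)%Z) by (apply lt_IZR; lra).
  assert (Hstep : IZR (q i) + 1 <= IZR (q2 i)) by (rewrite <- plus_IZR; apply IZR_le; lia).
  lra.
Qed.

Lemma coord_minimal_corner_margin n L nu i :
  (i <= n)%nat -> ~ dominated n L nu -> coord_minimal n L nu i ->
  exists d, 0 < d /\ exists q, L q /\ IZR (q i) = nu i /\
    forall j, (j <= n)%nat -> j <> i -> nu j + d <= IZR (q j).
Proof.
  intros Hi Hnu Hmin.
  destruct (coord_minimal_corner n L nu i Hi Hnu Hmin) as [q [Lq [Hqi Hq]]].
  destruct (finite_min_radius n (fun j d => j <> i -> nu j + d <= IZR (q j))) as [d [Hd Hdd]].
  { intros j d d' Hd' H Hji. specialize (H Hji). lra. }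
  { intros j Hj. destruct (Nat.eq_dec j i) as [->|Hji]; [exists 1; split; [lra | tauto]|].
    exists (IZR (q j) - nu j). specialize (Hq j Hj Hji). split; [lra | intros; lra]. }
  exists d. split; [exact Hd|]. exists q. split; [exact Lq|]. split; [exact Hqi|].
  intros j Hj Hji. exact (Hdd j Hj Hji).
Qed.

Lemma coord_minimal_locally_below n L nu :
  ~ dominated n L nu -> (forall i, (i <= n)%nat -> coord_minimal n L nu i) ->
  exists d, 0 < d /\ forall y, Defs.dist n nu y < d -> ~ dominated n L y -> vle n nu y.
Proof.
  intros Hnu Hmin.
  destruct (finite_min_radius n (fun i d => exists q, L q /\ IZR (q i) = nu i /\
              forall j, (j <= n)%nat -> j <> i -> nu j + d <= IZR (q j))) as [d [Hd Hcorner]].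
  { intros i d d' Hdd [q [Lq [Hqi Hq]]]. exists q. split; [exact Lq|]. split; [exact Hqi|].
    intros j Hj Hji. specialize (Hq j Hj Hji). lra. }
  { intros i Hi. exact (coord_minimal_corner_margin n L nu i Hi Hnu (Hmin i Hi)). }
  exists d. split; [exact Hd|]. intros y Hdist Hy i Hi.
  destruct (Hcorner i Hi) as [q [Lq [Hqi Hq]]].
  destruct (not_dominated_witness n L y q Hy Lq) as [j [Hj Hqj]].
  destruct (Nat.eq_dec j i) as [->|Hji]; [lra|].
  specialize (Hq j Hj Hji). pose proof (coord_dist_le n nu y j Hj).
  assert (Habs : Rabs (nu j - y j) < d) by lra. apply Rabs_def2 in Habs. lra.
Qed.

Lemma deg_monotone n x y : vle n x y -> deg n x <= deg n y.
Proof. intros H. unfold deg. apply sum_Rle. intros i Hi. apply H, Hi. Qed.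

Lemma Extc_of_coord_minimal n L nu :
  ~ dominated n L nu -> (forall i, (i <= n)%nat -> coord_minimal n L nu i) -> Extc n L nu.
Proof.
  intros Hnu Hmin. split; [apply Sigmac_iff_not_dominated, Hnu|].
  destruct (coord_minimal_locally_below n L nu Hnu Hmin) as [d [Hd Hbelow]].
  exists d. split; [exact Hd|]. intros y Hdist Hy.
  apply deg_monotone, Hbelow; [exact Hdist | apply Sigmac_iff_not_dominated, Hy].
Qed.

Theorem mainTheorem6 (n : nat) (L : zvec -> Prop) :
  (1 <= n)%nat ->
  sublattice_An n L ->
  has_rank n L ->
  forall x : vec,
    Sigmac n L x <-> exists nu : vec, Extc n L nu /\ vle n nu x.
Proof.
  intros Hn HL Hrank x. split.
  - intros Hx. apply Sigmac_iff_not_dominated in Hx.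
    destruct (lower_coords n L (full_rank_large_off_coord n L Hn HL Hrank) (S n) (le_n _) x Hx)
      as [nu [Hle [Hnu Hmin]]].
    exists nu. split; [|exact Hle].
    apply Extc_of_coord_minimal; [exact Hnu|]. intros i Hi. apply Hmin. lia.
  - intros [nu [[Hnu _] Hle]]. apply Sigmac_iff_not_dominated. intro Hx.
    apply Sigmac_iff_not_dominated in Hnu. exact (Hnu (dominated_antitone n L nu x Hle Hx)).
Qed.
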